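(* Let $M$ be a Hausdorff space, let $E:\mathbb{R}\to\mathcal{T}(M)$ be a strongly regular spectral family, and let $x\in\mathcal{D}(E)$. Then for every quasipoint $\mathfrak{B}_x$ of $\mathcal{T}(M)$ over $x$, \[ f_E(\mathfrak{B}_x)=f_E(x), \] where $f_E(\mathfrak{B}_x):=\inf\{\lambda\in\mathbb{R}\mid E_\lambda\in\mathfrak{B}_x\}$ and $f_E(x):=\inf\{\lambda\in\mathbb{R}\mid x\in E_\lambda\}$.
   Context: $\mathcal{T}(M)$ is the lattice of open subsets of $M$ with $\bigwedge_\alpha U_\alpha=\mathrm{int}\bigcap_\alpha U_\alpha$. A spectral family in $\mathcal{T}(M)$ is a map $E:\mathbb{R}\to\mathcal{T}(M)$ with $E_\lambda\subseteq E_\mu$ for $\lambda\le\mu$, $E_\lambda=\bigwedge_{\mu>\lambda}E_\mu$, $\bigwedge_\lambda E_\lambda=\emptyset$, $\bigcup_\lambda E_\lambda=M$; it is strongly regular if $\overline{E_\lambda}\subseteq E_\mu$ for all $\lambda<\mu$. $\mathcal{D}(E)=\{x\in M\mid\exists\lambda:x\notin E_\lambda\}$. A quasipoint of $\mathcal{T}(M)$ is a maximal dual ideal (maximal nonempty family of open sets not containing $\emptyset$, upward closed, closed under finite intersections); it is over $x$ if $x\in\bigcap_{U\in\mathfrak{B}}\overline{U}$. *)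

From HB Require Import structures.
From mathcomp Require Import all_boot all_order all_algebra.
From mathcomp Require Import all_classical all_reals all_analysis.
Set Implicit Arguments. Unset Strict Implicit. Unset Printing Implicit Defensive.
Import Order.TTheory GRing.Theory Num.Theory.
Local Open Scope classical_set_scope.
Local Open Scope ring_scope.

(* Infinite meet in the lattice T(M) of open sets: interior of the intersection. *)
Definition open_meet {M : topologicalType} {I : Type} (A : set I) (U : I -> set M)
  : set M := interior (\bigcap_(i in A) U i).

Definition spectral_family {R : realType} {M : topologicalType}
  (E : R -> set M) : Prop :=
  [/\ (forall l, open (E l)),
      (forall l m, l <= m -> E l `<=` E m),
      (forall l, E l = open_meet [set m | l < m] E),
      open_meet setT E = set0
    & \bigcup_l E l = setT].

Definition strongly_regular {R : realType} {M : topologicalType}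
  (E : R -> set M) : Prop :=
  spectral_family E /\ (forall l m, l < m -> closure (E l) `<=` E m).

Definition specD {R : realType} {M : topologicalType} (E : R -> set M) : set M :=
  [set x | exists l, ~ E l x].

Definition dual_ideal {M : topologicalType} (B : set (set M)) : Prop :=
  [/\ (forall U, B U -> open U),
      B !=set0,
      ~ B set0,
      (forall U V, B U -> open V -> U `<=` V -> B V)
    & (forall U V, B U -> B V -> B (U `&` V))].

Definition quasipoint {M : topologicalType} (B : set (set M)) : Prop :=
  dual_ideal B /\ (forall B', dual_ideal B' -> B `<=` B' -> B' = B).

Definition quasipoint_over {M : topologicalType} (B : set (set M)) (x : M) : Prop :=
  quasipoint B /\ (forall U, B U -> closure U x).

Local Open Scope ereal_scope.
Definition fE_qp {R : realType} {M : topologicalType} (E : R -> set M)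
  (B : set (set M)) : \bar R :=
  ereal_inf [set l%:E | l in [set l | B (E l)]].

Definition fE_pt {R : realType} {M : topologicalType} (E : R -> set M)
  (x : M) : \bar R :=
  ereal_inf [set l%:E | l in [set l | E l x]].

From mathcomp Require Import all_boot all_order all_algebra.
From mathcomp Require Import all_classical all_reals all_analysis.
Set Implicit Arguments. Unset Strict Implicit. Unset Printing Implicit Defensive.
Import Order.TTheory GRing.Theory Num.Theory.
Local Open Scope classical_set_scope.
Local Open Scope ring_scope.

(* A quasipoint over x contains every open neighbourhood of x, so E_l x
   implies E_l in B and f_E(B) <= f_E(x).  Conversely, if E_l lies in B then
   x is in the closure of E_l, which by strong regularity is contained in every
   E_m with m > l; hence f_E(x) <= l. *)

Section Quasipoint.
Variables (M : topologicalType) (B : set (set M)).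
Hypothesis qpB : quasipoint B.

(* Maximality: the dual ideal generated by B and U extends B. *)
Lemma quasipoint_meets (U : set M) :
  open U -> (forall V, B V -> U `&` V !=set0) -> B U.
Proof.
move: qpB => [[Bo [V0 BV0] _ _ BI] Bmax] oU meetU.
pose BU := [set W | open W /\ exists2 V, B V & U `&` V `<=` W].
have BBU : B `<=` BU by move=> V BV; split; [exact: Bo | exists V => // y []].
have BU_dual : dual_ideal BU.
  split.
  - by move=> W [].
  - by exists V0; exact: BBU.
  - by move=> [_ [V BV sub]]; case: (meetU V BV) => y /sub.
  - by move=> W W' [_ [V BV sub]] oW' sW; split=> //; exists V => // y /sub /sW.
  - move=> W W' [oW [V BV sub]] [oW' [V' BV' sub']]; split; first exact: openI.
    exists (V `&` V'); first exact: BI.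
    by move=> y [Uy [Vy V'y]]; split; [apply: sub | apply: sub'].
rewrite -(Bmax BU BU_dual BBU); split=> //; exists V0 => // y [].
Qed.

Lemma quasipoint_over_nbhs (x : M) (U : set M) :
  (forall V, B V -> closure V x) -> open U -> U x -> B U.
Proof.
move=> Bcl oU Ux; apply: quasipoint_meets => // V BV.
by case: (Bcl V BV U (open_nbhs_nbhs (conj oU Ux))) => y [Vy Uy]; exists y.
Qed.

End Quasipoint.

Local Open Scope ereal_scope.

Lemma fE_qp_le_pt (R : realType) (M : topologicalType) (E : R -> set M)
    (B : set (set M)) (x : M) :
  (forall l, open (E l)) -> quasipoint_over B x -> fE_qp E B <= fE_pt E x.
Proof.
move=> Eo [qpB Bcl]; apply: ereal_inf_le_tmp => _ [l Exl <-]; exists l => //=.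
exact: (quasipoint_over_nbhs qpB Bcl (Eo l)).
Qed.

Lemma fE_pt_le_closure (R : realType) (M : topologicalType) (E : R -> set M)
    (x : M) (l : R) :
  (forall m, (l < m)%R -> closure (E l) `<=` E m) -> closure (E l) x ->
  fE_pt E x <= l%:E.
Proof.
move=> Ereg Elx; apply/lee_addgt0Pr => e e0.
have l_lt_le : (l < l + e)%R by rewrite ltrDl.
by apply: ereal_inf_lbound; exists (l + e)%R => //; exact: Ereg.
Qed.

Theorem proposition2p44 (R : realType) (M : topologicalType)
  (hM : hausdorff_space M) (E : R -> set M) (hE : strongly_regular E)
  (x : M) (hx : specD E x) (B : set (set M)) (hB : quasipoint_over B x) :
  fE_qp E B = fE_pt E x.
Proof.
case: hE => [[Eo _ _ _ _] Ereg].
apply/eqP; rewrite eq_le fE_qp_le_pt //=.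
apply: le_ereal_inf_tmp => _ [l BEl <-].
apply: fE_pt_le_closure; first by move=> m; exact: Ereg.
exact: hB.2.
Qed.
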